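(* Let $G=(N,A)$ be an arc-compressed $s$-$t$ DAG. Then every arc $uv\in A$ that is an $s$-dominator is the immediate $s$-dominator of at least two of the arcs leaving $v$.
   Context: An $s$-$t$ DAG is a directed acyclic multigraph (parallel arcs allowed) with a unique source $s$ and a unique sink $t$ such that every node is reachable from $s$ and every node reaches $t$. It is arc-compressed if no node has both indegree exactly one and outdegree exactly one (i.e. every maximal path whose internal nodes have indegree and outdegree one consists of a single arc). An arc $ab$ $s$-dominates an arc $xy$ if $ab=xy$ or every $s$-$x$ path contains $ab$; it strictly $s$-dominates $xy$ if moreover $ab\neq xy$. An arc is an $s$-dominator if it strictly $s$-dominates some arc. The immediate $s$-dominator of an arc $xy$ having at least one strict $s$-dominator is the strict $s$-dominator of $xy$ that is $s$-dominated by all strict $s$-dominators of $xy$. *)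

From mathcomp Require Import all_boot.
Set Implicit Arguments. Unset Strict Implicit. Unset Printing Implicit Defensive.

(* A directed multigraph: finite node type N, finite arc type A, and
   tail/head maps; parallel arcs are distinct elements of A. *)
Section Multigraph.
Variables (N A : finType) (tl hd : A -> N).

Fixpoint is_walk (u v : N) (p : seq A) : bool :=
  match p with
  | [::] => u == v
  | e :: p' => (tl e == u) && is_walk (hd e) v p'
  end.

Definition indeg (v : N) : nat := #|[set e : A | hd e == v]|.
Definition outdeg (v : N) : nat := #|[set e : A | tl e == v]|.

Definition reaches (u v : N) : Prop := exists p, is_walk u v p.

Definition acyclic : Prop := forall (u : N) (p : seq A), is_walk u u p -> p = [::].

Definition st_dag (s t : N) : Prop :=
  [/\ acyclic,
      (forall v, indeg v == 0 <-> v = s),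
      (forall v, outdeg v == 0 <-> v = t),
      (forall v, reaches s v) &
      (forall v, reaches v t)].

Definition arc_compressed : Prop :=
  forall v : N, ~ (indeg v = 1 /\ outdeg v = 1).

Definition sdom (s : N) (ab xy : A) : Prop :=
  ab = xy \/ (forall p, is_walk s (tl xy) p -> ab \in p).

Definition strict_sdom (s : N) (ab xy : A) : Prop :=
  ab <> xy /\ sdom s ab xy.

Definition is_sdominator (s : N) (ab : A) : Prop :=
  exists xy, strict_sdom s ab xy.

Definition idom (s : N) (d xy : A) : Prop :=
  strict_sdom s d xy /\ (forall d', strict_sdom s d' xy -> sdom s d' d).

End Multigraph.

From mathcomp Require Import all_boot.
Set Implicit Arguments. Unset Strict Implicit. Unset Printing Implicit Defensive.

(* If uv strictly s-dominates some arc, then every s-walk reaching hd uv must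
   pass through uv: otherwise it could be continued, through hd uv, to an
   s-walk avoiding uv, since acyclicity forbids coming back to uv.  Hence uv
   is the only arc entering hd uv, so arc-compression forces at least two arcs
   leaving hd uv; and uv is the immediate s-dominator of each of them, because
   any strict s-dominator of such an arc lies on every s-walk to tl uv. *)

Section Dominators.
Variables (N A : finType) (tl hd : A -> N).
Implicit Types (u v w : N) (e f uv xy : A) (p q : seq A).

Local Notation walk := (is_walk tl hd).

Lemma is_walk_cat u v w p q : walk u v p -> walk v w q -> walk u w (p ++ q).
Proof.
elim: p u => [|e p IHp] u /=; first by move/eqP->.
by case/andP=> -> /IHp; apply.
Qed.

Lemma is_walk_arc e : walk (tl e) (hd e) [:: e].
Proof. by rewrite /= !eqxx. Qed.

Lemma is_walk_split u w p e :
  walk u w p -> e \in p ->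
  exists p1 p2, walk u (tl e) p1 /\ walk (hd e) w p2.
Proof.
elim: p u => [|f p IHp] u //= /andP[/eqP tl_f p_walk].
rewrite in_cons => /orP[/eqP-> | e_p]; first by exists [::], p; rewrite /= tl_f.
have [p1 [p2 [p1_walk p2_walk]]] := IHp _ p_walk e_p.
by exists (f :: p1), p2; rewrite /= tl_f eqxx.
Qed.

Lemma outdeg_reaches_neq0 u e : reaches tl hd u (tl e) -> outdeg tl u != 0.
Proof.
move=> [p p_walk]; rewrite cards_eq0; apply/set0Pn.
case: p p_walk => [/eqP-> | f p /andP[/eqP tl_f _]]; first by exists e; rewrite inE.
by exists f; rewrite inE tl_f.
Qed.

Variable s : N.

Lemma strict_sdom_reaches uv xy :
  reaches tl hd s (tl xy) -> strict_sdom tl hd s uv xy ->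
  reaches tl hd (hd uv) (tl xy).
Proof.
move=> [p p_walk] [uv_xy [//|uv_dom]].
by have [_ [q [_ q_walk]]] := is_walk_split p_walk (uv_dom _ p_walk); exists q.
Qed.

Hypothesis dag : acyclic tl hd.

Lemma acyclic_no_return e q : ~ walk (hd e) (tl e) q.
Proof. by move=> q_walk; have := dag (is_walk_cat (is_walk_arc e) q_walk). Qed.

Lemma strict_sdom_walks_hd uv xy :
  reaches tl hd s (tl xy) -> strict_sdom tl hd s uv xy ->
  forall p, walk s (hd uv) p -> uv \in p.
Proof.
move=> s_xy uv_xy p p_walk.
have [q q_walk] := strict_sdom_reaches s_xy uv_xy.
have [_ [//|uv_dom]] := uv_xy.
have := uv_dom _ (is_walk_cat p_walk q_walk); rewrite mem_cat => /orP[// | uv_q].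
have [q1 [_ [q1_walk _]]] := is_walk_split q_walk uv_q.
by case: (acyclic_no_return q1_walk).
Qed.

Section EntryArc.
Variable uv : A.
Hypothesis uv_entry : forall p, walk s (hd uv) p -> uv \in p.

Lemma indeg_entry_hd :
  (forall v, reaches tl hd s v) -> indeg hd (hd uv) = 1.
Proof.
move=> from_s; rewrite /indeg -(cards1 uv); apply: eq_card => e.
rewrite !inE; apply/idP/idP => [/eqP hd_e | /eqP->//].
have [q q_walk] := from_s (tl e).
have : uv \in q ++ [:: e].
  by apply: uv_entry; rewrite -hd_e; exact: is_walk_cat q_walk (is_walk_arc e).
rewrite mem_cat mem_seq1 eq_sym => /orP[uv_q | //].
have [_ [q2 [_ q2_walk]]] := is_walk_split q_walk uv_q.
by case: (@acyclic_no_return e q2); rewrite hd_e.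
Qed.

Lemma idom_entry_out e : tl e = hd uv -> idom tl hd s uv e.
Proof.
move=> tl_e; split.
  split; last by right; rewrite tl_e.
  by move=> uv_e; apply: (@acyclic_no_return uv [::]); rewrite /= {2}uv_e tl_e.
move=> d [_ [// | d_dom]].
have [-> | d_uv] := eqVneq d uv; [by left | right=> p p_walk].
rewrite tl_e in d_dom.
have := d_dom _ (is_walk_cat p_walk (is_walk_arc uv)).
by rewrite mem_cat mem_seq1 (negbTE d_uv) orbF.
Qed.

End EntryArc.

End Dominators.

Theorem lemma6 (N A : finType) (tl hd : A -> N) (s t : N) :
  st_dag tl hd s t ->
  arc_compressed tl hd ->
  forall uv : A, is_sdominator tl hd s uv ->
  exists e1 e2 : A,
    [/\ e1 <> e2, tl e1 = hd uv, tl e2 = hd uv,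
        idom tl hd s uv e1 & idom tl hd s uv e2].
Proof.
case=> dag _ _ from_s _ compressed uv [xy uv_xy].
have uv_entry := strict_sdom_walks_hd dag (from_s _) uv_xy.
have indeg1 := indeg_entry_hd dag uv_entry from_s.
have outdeg_neq0 := outdeg_reaches_neq0 (strict_sdom_reaches (from_s _) uv_xy).
have /card_gt1P[e1 [e2 []]] : 1 < outdeg tl (hd uv).
  rewrite ltn_neqAle lt0n outdeg_neq0 andbT; apply/eqP=> outdeg1.
  exact: compressed (hd uv) (conj indeg1 (esym outdeg1)).
rewrite !inE => /eqP tl_e1 /eqP tl_e2 e1_e2.
exists e1, e2; split => //; [exact/eqP | exact: idom_entry_out ..].
Qed.
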